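(* Let $q_1,\ldots,q_t$ be positive integers, $d=\sum_{k=1}^t q_k$, and let $G=K_{q_1,\ldots,q_t}$ be the complete multipartite graph of type $(q_1,\ldots,q_t)$. Then the Ehrhart polynomial of the edge polytope of $G$ is \[ i(\mathcal{P}_G,m)=f(m;d,d)-\sum_{k=1}^t f(m;d,q_k), \] where \[ f(m;d,j)=\sum_{k=1}^{j}p(m;d,k),\qquad p(m;d,j)=\binom{j+m-1}{j-1}\binom{d-j+m-1}{d-j}. \]
   Context: The complete multipartite graph $K_{q_1,\ldots,q_t}$ has vertex set a disjoint union $V_1\cup\cdots\cup V_t$ with $|V_i|=q_i$ and edge set $\{\{u,v\}: u\in V_i, v\in V_j, i\ne j\}$; label its vertices $1,\ldots,d$. For an edge $e=\{i,j\}$ set $\rho(e)=\mathbf{e}_i+\mathbf{e}_j\in\mathbb{R}^d$ ($\mathbf{e}_i$ the unit coordinate vectors). The edge polytope $\mathcal{P}_G$ is the convex hull of $\{\rho(e):e\in E(G)\}$. The Ehrhart polynomial $i(\mathcal{P},m)$ of an integral polytope $\mathcal{P}\subset\mathbb{R}^d$ is the polynomial with $i(\mathcal{P},m)=\#(m\mathcal{P}\cap\mathbb{Z}^d)$ for integers $m\ge0$. Binomial coefficients $\binom{a+m}{a}$ with $a\ge 0$ an integer are regarded as polynomials in $m$, namely $\prod_{i=1}^{a}(m+i)/a!$. *)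

From HB Require Import structures.
From mathcomp Require Import all_boot all_order all_algebra.
From mathcomp Require Import reals.
Set Implicit Arguments. Unset Strict Implicit. Unset Printing Implicit Defensive.
Import Order.TTheory GRing.Theory Num.Theory.
Local Open Scope ring_scope.

Section EdgePolytope.
Variable R : realType.

Definition rho (d : nat) (i j : 'I_d) : 'rV[R]_d :=
  \row_k ((k == i)%:R + (k == j)%:R).

Definition in_hull (d : nat) (I : finType) (P : pred I) (f : I -> 'rV[R]_d)
    (x : 'rV[R]_d) : Prop :=
  exists lam : I -> R,
    (forall i, 0 <= lam i) /\ (forall i, ~~ P i -> lam i = 0) /\
    \sum_(i | P i) lam i = 1 /\ x = \sum_(i | P i) lam i *: f i.

(* complete multipartite graph on vertices 'I_d, with vertex v in part
   [part v]; its edges are {u,v} (u < v) with part u != part v *)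
Definition cm_edge (d t : nat) (part : 'I_d -> 'I_t) : pred ('I_d * 'I_d) :=
  fun e => (e.1 < e.2)%N && (part e.1 != part e.2).

Definition in_edge_polytope (d t : nat) (part : 'I_d -> 'I_t) (x : 'rV[R]_d) :=
  in_hull (cm_edge part) (fun e => rho e.1 e.2) x.

Definition in_dilate (d t : nat) (part : 'I_d -> 'I_t) (m : nat) (x : 'rV[R]_d) :=
  exists y, in_edge_polytope part y /\ x = m%:R *: y.

(* binomial coefficient binom(a + x, a) as a polynomial in x, evaluated *)
Definition binpoly (a : nat) (x : R) : R :=
  (\prod_(i < a) (x + i.+1%:R)) / (a`!)%:R.

(* p(m;d,j) = binom(j+m-1, j-1) binom(d-j+m-1, d-j) *)
Definition pmdj (m : R) (d j : nat) : R :=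
  binpoly (j - 1) m * binpoly (d - j) (m - 1).

Definition fmdj (m : R) (d j : nat) : R :=
  \sum_(1 <= k < j.+1) pmdj m d k.

End EdgePolytope.

From HB Require Import structures.
From mathcomp Require Import all_boot all_order all_algebra.
From mathcomp Require Import reals.
From mathcomp Require Import zify.
Set Implicit Arguments. Unset Strict Implicit. Unset Printing Implicit Defensive.
Import Order.TTheory GRing.Theory Num.Theory.

(* For [t >= 2], the integer points of [m P_G] are the nonnegative integer
   vectors of coordinate sum [2 m] carrying weight at most [m] on every part:
   such a vector is a sum of [m] edges, found by repeatedly removing one unit
   from each of its two heaviest parts.  There are [f(m;d,d) = C(2m+d-1, d-1)]
   nonnegative vectors of sum [2 m], and at most one part of such a vector can
   weigh more than [m].  The vectors with more than [m] units on the [q_k]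
   coordinates of part [k] number [f(m;d,q_k)]: ordering the units, the
   [(m+1)]-st falls in the [j]-th of these coordinates in [p(m;d,j)] ways. *)

(** * Weak compositions *)

Fixpoint multichoose (a n : nat) : nat :=
  if a is a'.+1 then \sum_(i < n.+1) multichoose a' i else (n == 0 : nat).

Lemma sum_bin_hockey a n : \sum_(i < n.+1) 'C(i + a, a) = 'C(n + a.+1, a.+1).
Proof.
elim: n => [|n IHn]; first by rewrite big_ord1 !binn.
by rewrite big_ord_recr /= IHn -addSnnS binS addSn addnS.
Qed.

Lemma multichooseS a n : multichoose a.+1 n = 'C(n + a, a).
Proof.
elim: a n => [|a IHa] n.
  by rewrite /= big_ord_recl big1 ?addn0 ?bin0.
rewrite -sum_bin_hockey; apply: eq_bigr => i _; exact: IHa.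
Qed.

Lemma multichoose_n0 a : multichoose a 0 = 1.
Proof. by case: a => [//|a]; rewrite multichooseS binn. Qed.

Lemma prod_addS_bin a x : \prod_(i < a) (x + i.+1) = 'C(x + a, a) * a`!.
Proof.
elim: a => [|a IHa]; first by rewrite big_ord0 bin0.
rewrite big_ord_recr /= IHa factS.
have := mul_bin_diag (x + a.+1) a; rewrite addnS /= => bin_diag.
by rewrite mulnA (mulnC _ a.+1) -bin_diag; lia.
Qed.

Lemma sum_ord_rev (F : nat -> nat) n :
  \sum_(i < n.+1) F (n - i) = \sum_(i < n.+1) F i.
Proof.
rewrite (reindex_inj rev_ord_inj) /=; apply: eq_bigr => i _.
by rewrite subSS subKn // -ltnS.
Qed.

(* [heavy_count q b m] counts the pairs of weak compositions, into [q] and [b]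
   parts, of total size [2 m] whose first component has size more than [m]. *)
Definition heavy_count q b m :=
  \sum_(s < (2 * m).+1 | m < s) multichoose q s * multichoose b (2 * m - s).

Lemma heavy_count0 q b : heavy_count q b 0 = 0.
Proof. by rewrite /heavy_count big1 // => -[[|s] ?]. Qed.

Lemma heavy_countS q b n : heavy_count q b n.+1 =
  \sum_(i < n.+1) multichoose q (n.+2 + i) * multichoose b (n - i).
Proof.
rewrite /heavy_count -(big_mkord (fun s => n.+1 < s)
  (fun s => multichoose q s * multichoose b (2 * n.+1 - s))).
rewrite (big_cat_nat _ (n := n.+2)) //=; last by lia.
rewrite big1_seq ?add0n => [|i /andP[ni]]; last by rewrite mem_index_iota; lia.
rewrite -{1}(add0n n.+2) big_addn.
have -> : (2 * n.+1).+1 - n.+2 = n.+1 by lia.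
rewrite big_mkord big_mkcond /=; apply: eq_bigr => i _.
by rewrite ifT; [rewrite addnC; congr (_ * multichoose b _) | ]; lia.
Qed.

Lemma heavy_count_full a m : 0 < m -> heavy_count a 0 m = multichoose a (2 * m).
Proof.
move=> m_gt0; rewrite /heavy_count (bigD1 ord_max) /=; last by lia.
rewrite subnn muln1 big1 ?addn0 // => s /andP[_ s_max].
have : s < 2 * m by have := ltn_ord s; move: s_max; rewrite -val_eqE /=; lia.
by case: eqP => //; lia.
Qed.

Lemma heavy_count_recl q b n : heavy_count q.+1 b n.+1 =
  heavy_count q b.+1 n.+1 + multichoose q.+1 n.+1 * multichoose b.+1 n.
Proof.
rewrite !heavy_countS.
have splitq i : multichoose q.+1 (n.+2 + i) =
    multichoose q.+1 n.+1 + \sum_(j < i.+1) multichoose q (n.+2 + j).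
  by rewrite /= -addnS big_split_ord.
under eq_bigr do rewrite splitq mulnDl.
rewrite big_split /= -big_distrr /= sum_ord_rev addnC; congr (_ + _).
transitivity (\sum_(i < n.+1) \sum_(j < n.+1)
    (if j <= i then multichoose q (n.+2 + j) * multichoose b (n - i) else 0)).
  apply: eq_bigr => i _; rewrite big_distrl /=.
  rewrite (big_ord_widen n.+1 (fun j => multichoose q (n.+2 + j) * _)) //.
  by rewrite big_mkcond; apply: eq_bigr => j _; rewrite ltnS.
rewrite exchange_big /=; apply: eq_bigr => j _ /=.
rewrite big_distrr /= (big_ord_widen n.+1 (fun l => _ * multichoose b l));
  last by rewrite ltnS leq_subr.
rewrite [RHS]big_mkcond /= -[RHS](sum_ord_rev (fun l =>
  if l < (n - j).+1 then multichoose q (n.+2 + j) * multichoose b l else 0)).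
apply: eq_bigr => i _; have := ltn_ord i; have := ltn_ord j.
by rewrite ltnS; case: ifP; case: ifP => //; lia.
Qed.

Lemma heavy_countE q D n : q <= D -> heavy_count q (D - q) n.+1 =
  \sum_(1 <= k < q.+1) multichoose k n.+1 * multichoose (D - k).+1 n.
Proof.
elim: q => [|q IHq] q_le; first by rewrite big_geq // heavy_countS big1.
rewrite big_nat_recr //= -IHq ?(ltnW q_le) //.
by rewrite -(subnSK q_le) heavy_count_recl.
Qed.


Lemma sum_nat_of_bool (T : finType) (P : pred T) :
  \sum_x (P x : nat) = #|[set x | P x]|.
Proof. by rewrite -sum1dep_card [RHS]big_mkcond; apply: eq_bigr => x _; case: (P x). Qed.

(** * Counting bounded vectors with prescribed partial sums *)

Section BoundedVectors.
Variables (T : finType) (B : nat).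
Local Open Scope ring_scope.

Definition subsum (A : {set T}) (x : {ffun T -> 'I_B}) : nat :=
  (\sum_(i in A) (x i : nat))%N.

Lemma subsum_setC A x : (subsum setT x = subsum A x + subsum (~: A) x)%N.
Proof. by rewrite /subsum (big_setID A) /= setTI setTD. Qed.

Definition geom_poly : {poly int} := \sum_(j < B) 'X^j.

Lemma coef_geom_poly j : (j < B)%N -> geom_poly`_j = 1.
Proof.
move=> j_lt; rewrite /geom_poly coef_sum (bigD1 (Ordinal j_lt)) //= coefXn eqxx.
by rewrite big1 ?addr0 // => k; rewrite coefXn -val_eqE eq_sym => /negbTE ->.
Qed.

Lemma coef_geom_polyX a s : (s < B)%N -> (geom_poly ^+ a)`_s = (multichoose a s)%:R.
Proof.
elim: a s => [|a IHa] s s_lt; first by rewrite expr0 coef1.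
change (multichoose a.+1 s) with (\sum_(i < s.+1) multichoose a i)%N.
rewrite exprS coefM -(sum_ord_rev (multichoose a)) natr_sum.
apply: eq_bigr => j _; have j_lt := ltn_ord j.
by rewrite coef_geom_poly ?mul1r ?IHa //; lia.
Qed.

(* Compare the coefficients of [Y^s Z^r] on both sides of
   [prod_(v in A) (sum_(j < B) Y^j) * prod_(v notin A) (sum_(j < B) Z^j)]. *)
Lemma card_subsums A s r : (s < B)%N -> (r < B)%N ->
  #|[set x | (subsum A x == s) && (subsum (~: A) x == r)]| =
  (multichoose #|A| s * multichoose #|~: A| r)%N.
Proof.
move=> s_lt r_lt.
pose Z v : {poly {poly int}} := if v \in A then 'X%:P else 'X.
have expand : \prod_v \sum_(j : 'I_B) Z v ^+ j =
    \sum_(x : {ffun T -> 'I_B}) \prod_v Z v ^+ x v.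
  exact: bigA_distr_bigA.
have lhsE : \prod_v \sum_(j : 'I_B) Z v ^+ j =
    (geom_poly ^+ #|A|)%:P * (map_poly polyC geom_poly) ^+ #|~: A|.
  rewrite (bigID (mem A)) /= rmorphXn -!prodr_const; congr (_ * _).
    apply: eq_bigr => v vA; rewrite /Z vA rmorph_sum.
    by apply: eq_bigr => j _; rewrite rmorphXn.
  apply: eq_big => [v|v vA]; first by rewrite inE.
  rewrite /Z (negbTE vA) rmorph_sum; apply: eq_bigr => j _.
  by rewrite rmorphXn /= map_polyX.
have termE (x : {ffun T -> 'I_B}) :
    \prod_v Z v ^+ x v = ('X ^+ subsum A x)%:P * 'X ^+ subsum (~: A) x.
  rewrite (bigID (mem A)) /= rmorphXn /subsum -!prodrXr; congr (_ * _).
    by apply: eq_bigr => v vA; rewrite /Z vA.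
  by apply: eq_big => [v|v vA]; rewrite ?inE // /Z (negbTE vA).
move/(congr1 (fun P : {poly {poly int}} => (P`_r)`_s)): expand.
rewrite lhsE -rmorphXn coefCM coef_map /= coefMC !coef_geom_polyX // coef_sum coef_sum.
rewrite (eq_bigr (fun x => ((subsum A x == s) && (subsum (~: A) x == r) : nat)%:R));
  last first.
  move=> x _; rewrite termE coefCM coefXn mulr_natr coefMn coefXn.
  rewrite (eq_sym s) (eq_sym r).
  by case: (subsum A x == s); case: (subsum (~: A) x == r); rewrite ?mulr1n ?mulr0n.
by rewrite -natr_sum -natrM => /eqP; rewrite eqr_nat sum_nat_of_bool => /eqP.
Qed.

Lemma card_subsum s : (s < B)%N ->
  #|[set x | subsum setT x == s]| = multichoose #|T| s.
Proof.
move=> s_lt; have := card_subsums setT s_lt (leq_ltn_trans (leq0n s) s_lt).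
rewrite setCT cards0 multichoose_n0 muln1 cardsT => <-; apply: eq_card => x.
by rewrite !inE /subsum big_set0 andbT.
Qed.

Lemma subsum_disjoint_le (A A' : {set T}) x : [disjoint A & A'] ->
  (subsum A x + subsum A' x <= subsum setT x)%N.
Proof.
move=> AA'; rewrite (subsum_setC A) leq_add2l /subsum [X in (_ <= X)%N](big_setID A') /=.
by rewrite (setIidPr _) ?leq_addr // subsets_disjoint setCK disjoint_sym.
Qed.

End BoundedVectors.

Section Balanced.
Variables (T K : finType) (part : T -> K) (m : nat).
Local Notation B := (2 * m).+1.

Definition part_set k : {set T} := [set v | part v == k].

Definition balanced : {set {ffun T -> 'I_B}} :=
  [set x | (subsum setT x == 2 * m) && [forall k, subsum (part_set k) x <= m]].

Lemma card_heavy (A : {set T}) :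
  #|[set x : {ffun T -> 'I_B} | (subsum setT x == 2 * m) && (m < subsum A x)]| =
  heavy_count #|A| (#|T| - #|A|) m.
Proof.
rewrite /heavy_count -(cardsC A) addKn -sum_nat_of_bool.
rewrite [RHS](eq_bigr (fun s : 'I_B => \sum_(x : {ffun T -> 'I_B})
  ((subsum A x == s) && (subsum (~: A) x == 2 * m - s) : nat))); last first.
  by move=> s _; have := ltn_ord s; rewrite sum_nat_of_bool card_subsums //; lia.
rewrite exchange_big /=; apply: eq_bigr => x _; rewrite (subsum_setC A).
have [/andP[/eqP sum_x heavy_x]|light_x] :=
  boolP ((subsum A x + subsum (~: A) x == 2 * m) && (m < subsum A x)).
  have sA_lt : (subsum A x < B)%N by lia.
  rewrite (bigD1 (Ordinal sA_lt)) //= eqxx /= big1 => [|s /andP[_ s_neq]].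
    by rewrite addn0; case: eqP => //; lia.
  by case: eqP => // sA_eq; move: s_neq; rewrite -val_eqE /= sA_eq eqxx.
rewrite big1 // => s s_heavy; case: eqP => //= sA_eq; case: eqP => //= sC_eq.
have := ltn_ord s; move: light_x; rewrite sA_eq sC_eq; lia.
Qed.

(* Two distinct parts cannot both weigh more than half of the total [2 m]. *)
Lemma card_balanced_add :
  (#|balanced| + \sum_k heavy_count #|part_set k| (#|T| - #|part_set k|) m =
  multichoose #|T| (2 * m))%N.
Proof.
rewrite -(@card_subsum T B) //.
under eq_bigr do rewrite -card_heavy -sum_nat_of_bool.
rewrite -!sum_nat_of_bool exchange_big /= -big_split /=; apply: eq_bigr => x _.
have [sum_x|] /= := subsum setT x =P 2 * m; last by rewrite big1.
have [k heavy_k|all_light] := pickP (fun k => m < subsum (part_set k) x).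
  have -> : [forall k, subsum (part_set k) x <= m] = false.
    by apply/negbTE/forallPn; exists k; rewrite -ltnNge.
  rewrite (bigD1 k) //= heavy_k big1 //= => l l_neq.
  have disj : [disjoint part_set l & part_set k].
    apply/pred0P => v /=; rewrite !inE.
    by case: (part v =P l) => //= ->; exact/negbTE.
  by have := subsum_disjoint_le x disj; rewrite sum_x; lia.
have -> : [forall k, subsum (part_set k) x <= m].
  by apply/forallP => k; rewrite leqNgt all_light.
by rewrite big1 // => k _; rewrite all_light.
Qed.

End Balanced.

Lemma sum_nat_gt0_witness (I : finType) (P : pred I) (F : I -> nat) :
  0 < \sum_(i | P i) F i -> exists2 i, P i & 0 < F i.
Proof.
move=> sum_gt0; apply/exists_inP; move: sum_gt0; apply: contraLR => /exists_inPn F0.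
by rewrite -leqNgt leqn0 big1 // => i /F0; rewrite -leqNgt leqn0 => /eqP.
Qed.

Lemma sum_indicator (I : finType) (P : pred I) (u : I) :
  \sum_(i | P i) (i == u : nat) = P u.
Proof.
case Pu: (P u); first by rewrite (bigD1 u) //= eqxx big1 // => i /andP[_ /negbTE ->].
by rewrite big1 // => i Pi; case: eqP => // iu; move: Pi; rewrite iu Pu.
Qed.

(** * Integer points of the dilated polytope are sums of edges *)

Section EdgeDecomposition.
Variables (D t : nat) (part : 'I_D -> 'I_t).

Definition part_sum (x : 'I_D -> nat) k := \sum_(i | part i == k) x i.

Lemma sum_part_sum x : \sum_i x i = \sum_k part_sum x k.
Proof. exact: partition_big. Qed.

Definition edge_of (u v : 'I_D) := if u < v then (u, v) else (v, u).

Lemma cm_edge_of u v : part u != part v -> cm_edge part (edge_of u v).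
Proof.
rewrite /cm_edge /edge_of; case: (ltnP u v) => [uv|vu] puv /=; first by rewrite uv puv.
rewrite eq_sym puv andbT ltn_neqAle vu andbT.
by apply: contra puv => /eqP vu_eq; apply/eqP; congr part; apply/val_inj.
Qed.

Lemma edge_ofE u v i :
  (i == (edge_of u v).1) + (i == (edge_of u v).2) = (i == u) + (i == v).
Proof. by rewrite /edge_of; case: (ltnP u v) => _ //=; rewrite addnC. Qed.

Lemma indicator_pair_le (x : 'I_D -> nat) u v i : u != v -> 0 < x u -> 0 < x v ->
  (i == u) + (i == v) <= x i.
Proof.
move=> uv xu xv.
by case: (i =P u) => [->|_]; rewrite ?(negbTE uv) //=; case: (i =P v) => [->|_].
Qed.

Lemma sum_sub_pair x u v (P : pred 'I_D) : u != v -> 0 < x u -> 0 < x v ->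
  \sum_(i | P i) x i = \sum_(i | P i) (x i - (i == u) - (i == v)) + P u + P v.
Proof.
move=> uv xu xv; rewrite -!sum_indicator -!big_split /=; apply: eq_bigr => i _.
by have := indicator_pair_le i uv xu xv; move: (i == u) (i == v) => [] []; lia.
Qed.

Lemma two_heaviest_parts m x : \sum_i x i = 2 * m.+1 ->
    (forall k, part_sum x k <= m.+1) ->
  exists k j, [/\ k != j, 0 < part_sum x k, 0 < part_sum x j &
    forall l, l != k -> l != j -> part_sum x l <= m].
Proof.
move=> sum_x part_x; rewrite sum_part_sum in sum_x.
have [i0 _ _] : exists2 i, predT i & 0 < part_sum x i.
  by apply: sum_nat_gt0_witness; rewrite [X in 0 < X]sum_x.
pose k := [arg max_(k > i0) part_sum x k].
have k_max l : part_sum x l <= part_sum x k.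
  by rewrite /k; case: arg_maxnP => // k' _; apply.
have [|l0 l0k l0_pos] := @sum_nat_gt0_witness _ (predC1 k) (part_sum x).
  by move: sum_x; rewrite (bigD1 k) //=; have := part_x k; lia.
pose j := [arg max_(j > l0 | j != k) part_sum x j].
have [jk j_max] : j != k /\ forall l, l != k -> part_sum x l <= part_sum x j.
  by rewrite /j; case: arg_maxnP => // j' j'k j'_max; split => // l; apply: j'_max.
exists k, j; split => //; first by rewrite eq_sym.
- exact: leq_trans l0_pos (k_max l0).
- exact: leq_trans l0_pos (j_max l0 l0k).
move=> l lk lj; have := j_max l lk; have := k_max j; move: sum_x.
rewrite (bigD1 k) // (bigD1 j) //= (bigD1 l) /= ?lj ?lk //; lia.
Qed.

Lemma edge_decomposition m x : \sum_i x i = 2 * m ->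
    (forall k, part_sum x k <= m) ->
  exists mu : 'I_D * 'I_D -> nat,
    [/\ forall e, ~~ cm_edge part e -> mu e = 0, \sum_e mu e = m &
        forall i, x i = \sum_e mu e * ((i == e.1) + (i == e.2))].
Proof.
elim: m x => [|m IHm] x sum_x part_x.
  exists (fun _ => 0); split => [//||i]; first by rewrite big1.
  rewrite big1 //; move/eqP: sum_x; rewrite sum_nat_eq0 => /forallP x0.
  exact/eqP/x0.
have [k [j [kj k_pos j_pos others]]] := two_heaviest_parts sum_x part_x.
have [u /eqP uk xu] := sum_nat_gt0_witness k_pos.
have [v /eqP vj xv] := sum_nat_gt0_witness j_pos.
have uv : u != v by apply: contra kj => /eqP uv; rewrite -uk -vj uv.
pose y i := x i - (i == u) - (i == v).
have part_y l : part_sum x l = part_sum y l + (k == l) + (j == l).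
  by rewrite /part_sum (sum_sub_pair _ uv xu xv) uk vj.
have sum_y : \sum_i x i = \sum_i y i + 2.
  by rewrite (sum_sub_pair predT uv xu xv) -addnA.
have [|l|mu [mu_edge mu_sum mu_sub]] := IHm y.
- by move: sum_x; rewrite sum_y; lia.
- move: (part_y l) (part_x l); have [->|lk] := eqVneq l k.
    by rewrite eq_sym (negbTE kj); lia.
  have [->|lj] := eqVneq l j; first lia.
  by have := others l lk lj; lia.
exists (fun e => mu e + (e == edge_of u v)); split.
- move=> e e_nonedge; rewrite mu_edge //; case: eqP => // e_uv.
  by move: e_nonedge; rewrite e_uv cm_edge_of // uk vj.
- by rewrite big_split /= mu_sum sum_indicator addn1.
move=> i; under eq_bigr do rewrite mulnDl.
rewrite big_split /= -mu_sub (bigD1 (edge_of u v)) //= eqxx mul1n edge_ofE /y.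
rewrite big1 => [|e /negbTE -> //]; have := indicator_pair_le i uv xu xv.
by move: (i == u) (i == v) => [] []; lia.
Qed.

End EdgeDecomposition.

Local Open Scope ring_scope.

(** * The polynomials [p(m;d,j)] and [f(m;d,j)] at integers *)

Section Evaluation.
Variable R : realType.

Lemma binpoly_nat a x : binpoly a (x%:R : R) = 'C(x + a, a)%:R.
Proof.
rewrite /binpoly (_ : \prod_(i < a) _ = (\prod_(i < a) (x + i.+1))%:R); last first.
  by rewrite natr_prod; apply: eq_bigr => i _; rewrite natrD.
by rewrite prod_addS_bin natrM mulfK // pnatr_eq0 -lt0n fact_gt0.
Qed.

Lemma binpoly_N1 a : binpoly a (-1 : R) = (a == 0)%:R.
Proof.
case: a => [|a]; first by rewrite /binpoly big_ord0 divr1.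
by rewrite /binpoly big_ord_recl /= addNr !mul0r.
Qed.

Lemma pmdj_nat k D n : (0 < k <= D)%N ->
  pmdj (n.+1%:R : R) D k = (multichoose k n.+1 * multichoose (D - k).+1 n)%:R.
Proof.
case: k => [//|k] _.
rewrite /pmdj binpoly_nat subn1 /= -multichooseS natrM; congr (_ * _).
by rewrite mulrSr addrK binpoly_nat -multichooseS.
Qed.

Lemma pmdj_0 D k : pmdj (0 : R) D k = (D - k == 0)%N%:R.
Proof. by rewrite /pmdj sub0r binpoly_N1 (binpoly_nat _ 0) binn mul1r. Qed.

Lemma fmdj_natS q D n : (q <= D)%N ->
  fmdj (n.+1%:R : R) D q = (heavy_count q (D - q) n.+1)%:R.
Proof.
move=> q_le; rewrite heavy_countE // /fmdj natr_sum.
by apply: eq_big_nat => k k_le; rewrite pmdj_nat //; lia.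
Qed.

Lemma fmdj_heavy_count q D m : (q < D)%N ->
  fmdj (m%:R : R) D q = (heavy_count q (D - q) m)%:R.
Proof.
move=> q_lt; case: m => [|n]; last exact/fmdj_natS/ltnW.
rewrite heavy_count0 /fmdj big1_seq // => k; rewrite mem_index_iota pmdj_0.
by case: eqP => //; lia.
Qed.

Lemma fmdj_diag D m : (0 < D)%N ->
  fmdj (m%:R : R) D D = (multichoose D (2 * m))%:R.
Proof.
move=> D_gt0; case: m => [|n]; last by rewrite fmdj_natS // subnn heavy_count_full.
rewrite multichoose_n0 /fmdj big_nat_recr //= pmdj_0 subnn big1_seq ?add0r // => k.
by rewrite mem_index_iota pmdj_0; case: eqP => //; lia.
Qed.

Lemma fmdj_one_part t (q : 'I_t -> nat) (x : R) : (t <= 1)%N ->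
  fmdj x (\sum_(k < t) q k) (\sum_(k < t) q k) = \sum_(k < t) fmdj x (\sum_(k < t) q k) (q k).
Proof. by case: t q => [|[|//]] q _; rewrite ?big_ord1 // !big_ord0 /fmdj big_geq. Qed.

End Evaluation.

Section LatticePoints.
Variables (R : realType) (D t : nat) (part : 'I_D -> 'I_t).

Definition balanced_point m (z : 'rV[int]_D) : Prop :=
  [/\ forall i, 0 <= z ord0 i, \sum_i z ord0 i = (2 * m)%N%:Z &
      forall k, \sum_(i | part i == k) z ord0 i <= m%:Z].

Lemma in_dilate_balanced m (z : 'rV[int]_D) :
  in_dilate part m (map_mx (fun n : int => n%:~R : R) z) -> balanced_point m z.
Proof.
case=> y [[lam [lam_ge0 [_ [lam_sum y_eq]]]] z_eq].
have coordE i : (z ord0 i)%:~R = m%:R *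
    \sum_(e | cm_edge part e) lam e * ((i == e.1)%:R + (i == e.2)%:R) :> R.
  have := congr1 (fun M : 'rV[R]_D => M ord0 i) z_eq; rewrite !mxE y_eq summxE => ->.
  by congr (_ * _); apply: eq_bigr => e _; rewrite !mxE.
have sumE (P : pred 'I_D) : \sum_(i | P i) (z ord0 i)%:~R =
    m%:R * \sum_(e | cm_edge part e) lam e * (P e.1 + P e.2)%:R :> R.
  under eq_bigr do rewrite coordE.
  rewrite -mulr_sumr exchange_big /=; congr (_ * _); apply: eq_bigr => e _.
  by rewrite -mulr_sumr big_split /= -!natr_sum !sum_indicator natrD.
split.
- move=> i; rewrite -(ler0z R) coordE mulr_ge0 // sumr_ge0 // => e _.
  by rewrite mulr_ge0 // addr_ge0.
- apply/eqP; rewrite -(eqr_int R) rmorph_sum /= (sumE predT) /=.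
  by rewrite -mulr_suml lam_sum mul1r -pmulrn natrM mulrC.
move=> k; rewrite -(ler_int R) rmorph_sum /= sumE -pmulrn.
rewrite -[leRHS]mulr1 -[X in _ <= _ * X]lam_sum.
apply: ler_wpM2l => //; apply: ler_sum => e e_edge.
rewrite ler_piMr // lern1; move: e_edge => /andP[_ part_e].
case: (part e.1 =P k) => [<-|_]; last by case: (_ == k).
by rewrite eq_sym (negbTE part_e).
Qed.

Lemma rho_in_edge_polytope e : cm_edge part e -> in_edge_polytope part (rho R e.1 e.2).
Proof.
move=> e_edge; exists (fun f => (f == e)%:R); split; [|split; [|split]].
- by move=> f; rewrite ler0n.
- by move=> f; case: eqP => // ->; rewrite e_edge.
- by rewrite -natr_sum sum_indicator e_edge.
rewrite (bigD1 e) //= eqxx scale1r big1 ?addr0 // => f /andP[_ /negbTE ->].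
by rewrite scale0r.
Qed.

Lemma edge_sum_in_dilate m (mu : 'I_D * 'I_D -> nat) : (0 < m)%N ->
    (forall e, ~~ cm_edge part e -> mu e = 0) -> (\sum_e mu e)%N = m ->
  in_dilate part m (\sum_e (mu e)%:R *: rho R e.1 e.2).
Proof.
move=> m_gt0 mu_out mu_sum; have m_neq0 : (m%:R : R) != 0 by rewrite pnatr_eq0 -lt0n.
have sum_edges : \sum_e (mu e)%:R *: rho R e.1 e.2 =
    \sum_(e | cm_edge part e) (mu e)%:R *: rho R e.1 e.2.
  rewrite (bigID (cm_edge part)) /= [X in _ + X]big1 ?addr0 // => e /mu_out ->.
  by rewrite scale0r.
pose lam e : R := (mu e)%:R / m%:R.
exists (\sum_(e | cm_edge part e) lam e *: rho R e.1 e.2); split.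
  exists lam; split; [|split; [|split]] => //.
  - by move=> e; rewrite divr_ge0.
  - by move=> e e_out; rewrite /lam mu_out // mul0r.
  rewrite /lam -mulr_suml -natr_sum (_ : \sum_(e | _) mu e = m) ?divff //.
  rewrite -mu_sum [RHS](bigID (cm_edge part)) /=.
  by rewrite [X in (_ + X)%N]big1 ?addn0 // => e /mu_out.
rewrite sum_edges scaler_sumr; apply: eq_bigr => e _.
by rewrite scalerA /lam mulrCA divff ?mulr1.
Qed.

Lemma balanced_in_dilate m (z : 'rV[int]_D) e0 : cm_edge part e0 ->
  balanced_point m z -> in_dilate part m (map_mx (fun n : int => n%:~R : R) z).
Proof.
move=> e0_edge [z_ge0 z_sum z_part].
pose x i := `|z ord0 i|%N.
have sum_xE (P : pred 'I_D) : (\sum_(i | P i) x i)%N%:Z = \sum_(i | P i) z ord0 i.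
  by rewrite -natz natr_sum; apply: eq_bigr => i _; rewrite natz gez0_abs.
have sum_x : \sum_i x i = (2 * m)%N by apply/eqP; rewrite -eqz_nat sum_xE z_sum.
have part_x k : (part_sum part x k <= m)%N by rewrite -lez_nat sum_xE.
have [mu [mu_out mu_sum mu_x]] := edge_decomposition sum_x part_x.
have zE : map_mx (fun n : int => n%:~R : R) z = \sum_e (mu e)%:R *: rho R e.1 e.2.
  apply/rowP => i; rewrite !mxE summxE -(gez0_abs (z_ge0 i)) -/(x i) mu_x.
  rewrite -pmulrn natr_sum; apply: eq_bigr => e _.
  by rewrite !mxE natrM natrD.
have [m0|m_gt0] := posnP m; last by rewrite zE; exact: edge_sum_in_dilate.
exists (rho R e0.1 e0.2); split; first exact: rho_in_edge_polytope.
rewrite zE m0 scale0r big1 // => e _.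
move/eqP: mu_sum; rewrite m0 sum_nat_eq0 => /forallP/(_ e)/eqP ->.
by rewrite scale0r.
Qed.

Lemma in_dilate_no_edge m (x : 'rV[R]_D) :
  (forall e, ~~ cm_edge part e) -> ~ in_dilate part m x.
Proof.
move=> no_edge [y [[lam [_ [_ [lam_sum _]]]] _]].
move: lam_sum; rewrite big_pred0 => [/eqP|e]; last exact/negbTE/no_edge.
by rewrite eq_sym oner_eq0.
Qed.

End LatticePoints.

Lemma ltn_sum_ord t (q : 'I_t -> nat) k : (1 < t)%N -> (forall l, 0 < q l)%N ->
  (q k < \sum_(l < t) q l)%N.
Proof.
move=> t_gt1 q_gt0.
pose o : 'I_t := if val k == 0%N then Ordinal t_gt1 else Ordinal (ltnW t_gt1).
have ok : o != k.
  rewrite /o -val_eqE; case: (val k =P 0%N) => [-> //|k_neq0] /=.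
  by apply/eqP => /esym.
by rewrite (bigD1 k) // (bigD1 o) //=; have := q_gt0 o; lia.
Qed.

Section Assembly.
Variables (D t : nat) (part : 'I_D -> 'I_t).

Definition ffun_row n (x : {ffun 'I_D -> 'I_n}) : 'rV[int]_D := \row_i (x i : nat)%:Z.

Lemma ffun_row_inj n : injective (@ffun_row n).
Proof.
move=> x y /rowP xy; apply/ffunP => i; apply/val_inj.
by have := xy i; rewrite !mxE => -[].
Qed.

Lemma subsum_part_set n (x : {ffun 'I_D -> 'I_n}) k :
  subsum (part_set part k) x = \sum_(i | part i == k) (x i : nat).
Proof. by apply: eq_bigl => i; rewrite inE. Qed.

Lemma balanced_pointP m (z : 'rV[int]_D) :
  balanced_point part m z <-> z \in [seq ffun_row x | x <- enum (balanced part m)].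
Proof.
have sumZ n (x : {ffun 'I_D -> 'I_n}) (P : pred 'I_D) :
    \sum_(i | P i) (ffun_row x) ord0 i = (\sum_(i | P i) (x i : nat))%N%:Z.
  by rewrite -natz natr_sum; apply: eq_bigr => i _; rewrite mxE natz.
split=> [[z_ge0 z_sum z_part]|/mapP[x]]; last first.
  rewrite mem_enum inE => /andP[/eqP x_sum /forallP x_part] ->.
  split=> [i||k]; first by rewrite mxE.
  - rewrite sumZ -[in RHS]x_sum /subsum; congr Posz.
    by apply: eq_bigl => i; rewrite inE.
  - by rewrite sumZ lez_nat -subsum_part_set.
have z_le i : (`|z ord0 i| < (2 * m).+1)%N.
  rewrite ltnS -lez_nat gez0_abs // -z_sum (bigD1 i) //= lerDl.
  exact: sumr_ge0.
pose x : {ffun 'I_D -> 'I_(2 * m).+1} := [ffun i => Ordinal (z_le i)].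
have zE : z = ffun_row x by apply/rowP => i; rewrite !mxE ffunE /= gez0_abs.
apply/mapP; exists x => //; rewrite mem_enum inE; apply/andP; split.
  rewrite -eqz_nat /subsum -sumZ -zE [X in X == _](eq_bigl predT) ?z_sum //.
  by move=> i; rewrite inE.
by apply/forallP => k; rewrite -lez_nat subsum_part_set -sumZ -zE z_part.
Qed.

Lemma cm_edge_one_part e : (t <= 1)%N -> ~~ cm_edge part e.
Proof.
move=> t_le1; rewrite /cm_edge negb_and negbK; apply/orP; right; apply/eqP/val_inj.
by case: (part e.1) (part e.2) => [i i_lt] [j j_lt] /=; lia.
Qed.

Lemma exists_cm_edge : (1 < t)%N -> (forall k, 0 < #|part_set part k|)%N ->
  exists e, cm_edge part e.
Proof.
move=> t_gt1 parts_gt0.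
have vertex k : exists v, part v = k.
  have /set0Pn[v] : part_set part k != set0 by rewrite -card_gt0.
  by rewrite inE => /eqP; exists v.
have [u u0] := vertex (Ordinal (ltnW t_gt1)).
have [v v1] := vertex (Ordinal t_gt1).
by exists (edge_of u v); apply: cm_edge_of; rewrite u0 v1 -val_eqE.
Qed.

Lemma card_balanced (R : realType) m (q : 'I_t -> nat) :
    (forall k, #|[set v | part v == k]| = q k) -> (forall k, q k < D)%N -> (0 < D)%N ->
  (#|balanced part m|)%:R = fmdj (m%:R : R) D D - \sum_k fmdj (m%:R : R) D (q k).
Proof.
move=> part_q q_lt D_gt0; have := card_balanced_add part m; rewrite card_ord => card_eq.
have fmdj_part k : fmdj (m%:R : R) D (q k) =
    (heavy_count #|part_set part k| (D - #|part_set part k|) m)%:R.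
  by rewrite fmdj_heavy_count // -part_q.
by rewrite (eq_bigr _ (fun k _ => fmdj_part k)) -natr_sum fmdj_diag // -card_eq natrD addrK.
Qed.

End Assembly.



Theorem proposition1p3 (R : realType) (t : nat) (q : 'I_t -> nat)
    (hq : forall k, (0 < q k)%N)
    (part : 'I_(\sum_(k < t) q k) -> 'I_t)
    (hpart : forall k, #|[set v | part v == k]| = q k)
    (m : nat) :
  exists s : seq 'rV[int]_(\sum_(k < t) q k),
    [/\ uniq s,
        (forall z : 'rV[int]_(\sum_(k < t) q k),
           z \in s <-> in_dilate part m (map_mx (fun n : int => n%:~R : R) z))
      & (size s)%:R =
          fmdj (m%:R : R) (\sum_(k < t) q k) (\sum_(k < t) q k)
          - \sum_(k < t) fmdj (m%:R : R) (\sum_(k < t) q k) (q k)].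
Proof.
have [t_le1|t_gt1] := leqP t 1.
  have no_edge e : ~~ cm_edge part e by apply: cm_edge_one_part.
  exists [::]; split=> // [z|]; last by rewrite fmdj_one_part ?subrr.
  by split=> // /(in_dilate_no_edge no_edge).
have [e0 e0_edge] : exists e, cm_edge part e.
  by apply: exists_cm_edge => // k; rewrite /part_set hpart.
have q_lt k : (q k < \sum_(l < t) q l)%N by apply: ltn_sum_ord.
exists [seq ffun_row x | x <- enum (balanced part m)]; split.
- by rewrite map_inj_uniq ?enum_uniq //; apply: ffun_row_inj.
- move=> z; rewrite -balanced_pointP; split; last exact: in_dilate_balanced.
  exact: balanced_in_dilate e0_edge.
rewrite size_map -cardE; apply: card_balanced => //.
exact: leq_ltn_trans (q_lt (Ordinal t_gt1)).
Qed.
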